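(* Let $N\ge 2$ and let $\mathcal{B}=\{|\psi_i^{+}\rangle,|\psi_i^{-}\rangle : i=1,\dots,2^{N-1}\}$ be an $N$-qubit GHZ-type basis as defined in the context, with $\alpha_i\ge\beta_i>0$ for every $i$ (so that every state of $\mathcal{B}$ is entangled). If $S\subseteq\mathcal{B}$ is perfectly LOCC distinguishable with respect to some spatial configuration of the $N$ qubits, then $|S|\le 2^{N-1}$. Moreover, this bound is attained: there exists $S\subseteq\mathcal{B}$ with $|S|=2^{N-1}$ (one state from each conjugate pair $\{|\psi_i^{+}\rangle,|\psi_i^{-}\rangle\}$) that is perfectly LOCC distinguishable when all $N$ qubits are held by $N$ different, spatially separated parties.
   Context: For an $N$-bit string $\mathbf{k}\in\{0,1\}^N$ let $\overline{\mathbf{k}}$ denote its bitwise complement. The $2^N$ strings split into $2^{N-1}$ unordered pairs $\{\mathbf{k}_i,\overline{\mathbf{k}_i}\}$, $i=1,\dots,2^{N-1}$. For each $i$ choose real numbers $\alpha_i\ge\beta_i\ge 0$ with $\alpha_i^2+\beta_i^2=1$, and define the $i$-th conjugate pair $|\psi_i^{+}\rangle=\alpha_i|\mathbf{k}_i\rangle+\beta_i|\overline{\mathbf{k}_i}\rangle$, $|\psi_i^{-}\rangle=\beta_i|\mathbf{k}_i\rangle-\alpha_i|\overline{\mathbf{k}_i}\rangle$, where $|\mathbf{k}\rangle$ is the computational basis state of $(\mathbb{C}^2)^{\otimes N}$. These $2^N$ states form an orthonormal basis. A spatial configuration is a partition of the $N$ qubits into at least two nonempty groups, each group held by a distinct party;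 LOCC refers to local quantum operations by the parties on their own groups of qubits together with classical communication. A set $S$ of mutually orthogonal states is perfectly LOCC distinguishable in a configuration if there is an LOCC protocol which, when given an unknown state from $S$, identifies which state it is with probability $1$. *)

(* Scalars: an arbitrary numClosedFieldType C (model of the complex numbers). *)
From HB Require Import structures.
From mathcomp Require Import all_boot all_order all_algebra.
Set Implicit Arguments. Unset Strict Implicit. Unset Printing Implicit Defensive.
Import Order.TTheory GRing.Theory Num.Theory.
Local Open Scope ring_scope.

Definition bits (N : nat) := {ffun 'I_N -> bool}.
Definition bcomp (N : nat) (k : bits N) : bits N := [ffun q => ~~ k q].

Section Q.
Variable C : numClosedFieldType.
Variable N : nat.

(* vectors of (C^2)^{\otimes N} in the computational basis, and operators *)
Definition vec := bits N -> C.
Definition op := bits N -> bits N -> C.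

Definition ket (k : bits N) : vec := fun x => (x == k)%:R.
Definition applyop (K : op) (v : vec) : vec := fun x => \sum_y K x y * v y.
Definition norm2 (v : vec) : C := \sum_x `|v x| ^+ 2.

Definition pairing (k : 'I_(2 ^ (N - 1)) -> bits N) : Prop :=
  (forall x : bits N, exists i, x = k i \/ x = bcomp (k i)) /\
  (forall i j, (k i = k j \/ k i = bcomp (k j)) -> i = j).

(* GHZ-type basis: label (i, true) is psi_i^+, (i, false) is psi_i^- *)
Definition ghz (k : 'I_(2 ^ (N - 1)) -> bits N) (alpha beta : 'I_(2 ^ (N - 1)) -> C)
  (l : 'I_(2 ^ (N - 1)) * bool) : vec :=
  fun x => if l.2 then alpha l.1 * ket (k l.1) x + beta l.1 * ket (bcomp (k l.1)) x
           else beta l.1 * ket (k l.1) x - alpha l.1 * ket (bcomp (k l.1)) x.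

(* spatial configuration: qubit q is held by party part q *)
Variable M : nat.
Variable part : 'I_N -> 'I_M.

Definition agree_off (p : 'I_M) (x y : bits N) : Prop :=
  forall q, part q != p -> x q = y q.
Definition agree_on (p : 'I_M) (x y : bits N) : Prop :=
  forall q, part q = p -> x q = y q.

(* K acts as K_p (x) Id on the qubits held by the other parties *)
Definition local_op (p : 'I_M) (K : op) : Prop :=
  (forall x y, ~ agree_off p x y -> K x y = 0) /\
  (forall x y x' y', agree_off p x y -> agree_off p x' y' ->
     agree_on p x x' -> agree_on p y y' -> K x y = K x' y').

(* finite-round LOCC protocol: a tree; at each node one party performs a local
   measurement (Kraus operators), the outcome is broadcast, and the protocol
   continues on the branch; leaves carry the guessed label *)
Variable L : eqType.
Inductive protocol : Type :=
  | Leaf : L -> protocol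
  | Node : 'I_M -> seq (op * protocol) -> protocol.

Fixpoint valid (P : protocol) : Prop :=
  match P with
  | Leaf _ => True
  | Node p br =>
      (forall x y, \sum_(Kt <- br) \sum_z (Kt.1 z x)^* * Kt.1 z y = (x == y)%:R) /\
      (fix go (br : seq (op * protocol)) : Prop :=
         match br with
         | [::] => True
         | (K, t) :: br' => local_op p K /\ valid t /\ go br'
         end) br
  end.

(* probability that the protocol, run on (unnormalised) state v, outputs label s *)
Fixpoint succ_prob (P : protocol) (s : L) (v : vec) : C :=
  match P with
  | Leaf l => if l == s then norm2 v else 0
  | Node _ br =>
      (fix go (br : seq (op * protocol)) : C :=
         match br with
         | [::] => 0
         | (K, t) :: br' => succ_prob t s (applyop K v) + go br'
         end) br
  end.

Definition LOCC_dist (psi : L -> vec) (S : pred L) : Prop :=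
  exists P : protocol, valid P /\ forall s, S s -> succ_prob P s (psi s) = 1.

End Q.

Definition configuration (N M : nat) (part : 'I_N -> 'I_M) : Prop :=
  (2 <= M)%N /\ forall p : 'I_M, exists q, part q = p.

(* Pick a party p0 holding some qubit.  Across the cut between
   p0 and the other parties every ket factors, so for a string y the kets
   |y>, |y'>, |~y'>, |~y>, where y' flips the bits of y outside p0, form a 2x2
   array of product vectors (u_a (x) w_b).  The map leading to any leaf of an
   LOCC protocol is a composition of local Kraus operators; it is linear and
   keeps such arrays ([leaf_maps]).  From this and the bookkeeping of leaf
   weights ([off_label_leaf_kills]) the key lemma [no_three_states] follows:
   no protocol identifies both psi^+ and psi^- of the pair {y, ~y} together
   with any entangled state of the pair {y', ~y'}.  The map y |-> y' induces a
   fixed-point-free involution on pair indices, and a counting lemma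
   ([card_no_pattern]) gives |S| <= 2^(N-1).

   Attainability.  All parties measure in the computational basis
   ([measure_all]); the outcome determines the pair, so the 2^(N-1) states
   psi_i^+ are identified with certainty ([locc_attain]). *)

From HB Require Import structures.
From mathcomp Require Import all_boot all_order all_algebra.
From mathcomp Require Import ring zify.
From Stdlib Require Import FunctionalExtensionality Classical.
From Stdlib Require List.
Set Implicit Arguments. Unset Strict Implicit. Unset Printing Implicit Defensive.
Import Order.TTheory GRing.Theory Num.Theory.
Local Open Scope ring_scope.

Lemma sum_In_eq (R : nmodType) (T : Type) (r : seq T) (F G : T -> R) :
  (forall g, List.In g r -> F g = G g) -> \sum_(g <- r) F g = \sum_(g <- r) G g.
Proof.
elim: r => [|a r IH] H; first by rewrite !big_nil.
by rewrite !big_cons H /= ?IH //; [move=> g Hg; apply: H; right | left].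
Qed.

Lemma sum_In_eq0 (R : numDomainType) (T : Type) (r : seq T) (F : T -> R) :
  (forall g, 0 <= F g) -> \sum_(g <- r) F g = 0 -> forall g, List.In g r -> F g = 0.
Proof.
move=> F_ge0; elim: r => [|a r IH] //=; rewrite big_cons => /eqP.
rewrite paddr_eq0 ?sumr_ge0 // => /andP[/eqP Fa /eqP Fr] g [<-|Hg] //.
exact: IH.
Qed.

Lemma rotation_kernel (R : comNzRingType) (a b u v : R) :
  a ^+ 2 + b ^+ 2 = 1 -> a * u + b * v = 0 -> b * u + - a * v = 0 -> u = 0.
Proof.
move=> ab1 E1 E2.
have -> : u = a * (a * u + b * v) + b * (b * u + - a * v).
  by rewrite -[LHS]mul1r -ab1; ring.
by rewrite E1 E2 !mulr0 addr0.
Qed.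

Lemma sum_involution_le (T : finType) (s : T -> T) (c : T -> nat) :
  involutive s -> (forall i, c i + c (s i) <= 2)%N -> (\sum_i c i <= #|T|)%N.
Proof.
move=> sK Hc; rewrite -(@leq_pmul2l 2) // mul2n -addnn.
rewrite [X in (_ + X)%N](reindex_inj (inv_inj sK)) /= -big_split /=.
apply: (@leq_trans (\sum_(i : T) 2)%N); first by apply: leq_sum => i _; apply: Hc.
by rewrite sum_nat_const mulnC.
Qed.

(* A set of labels (i, sign) containing no pattern {(i,+), (i,-), (s i, _)}, for
   an involution s, has at most #|I| elements: c i + c (s i) <= 2 for the
   number c i of labels with index i. *)
Lemma card_no_pattern (I : finType) (s : I -> I) (S : {set I * bool}) :
  involutive s ->
  (forall i b, (i, true) \in S -> (i, false) \in S -> (s i, b) \in S -> False) ->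
  (#|S| <= #|I|)%N.
Proof.
move=> sK noP; pose c i := (((i, true) \in S) + ((i, false) \in S))%N.
have -> : #|S| = (\sum_i c i)%N.
  have -> : #|S| = (\sum_(p : I * bool) (((p.1, p.2) \in S) : nat))%N.
    rewrite -sum1_card big_mkcond /=; apply: eq_bigr => -[i b] _ /=.
    by case: (_ \in S).
  rewrite -(pair_bigA _ (fun i b => (((i, b) \in S) : nat))) /=.
  by apply: eq_bigr => i _; rewrite big_bool.
have c_le2 j : (c j <= 2)%N by rewrite /c; case: (_ \in S); case: (_ \in S).
have full j : c j = 2%N -> c (s j) = 0%N.
  move=> cj; have [Ht Hf] : (j, true) \in S /\ (j, false) \in S.
    by move: cj; rewrite /c; case: (_ \in S); case: (_ \in S).
  rewrite /c.
  case Hst: ((s j, true) \in S); first by case: (noP _ _ Ht Hf Hst).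
  by case Hsf: ((s j, false) \in S); first by case: (noP _ _ Ht Hf Hsf).
apply: (sum_involution_le sK) => i.
have [/full -> | ci] := eqVneq (c i) 2%N; first by rewrite addn0.
have [csi | csi] := eqVneq (c (s i)) 2%N.
  by move: (full _ csi); rewrite sK csi => ->.
have := c_le2 i; have := c_le2 (s i); lia.
Qed.

Section Protocols.
Variables (C : numClosedFieldType) (N M : nat) (part : 'I_N -> 'I_M) (L : eqType).
Local Notation vec := (vec C N).
Local Notation op := (op C N).
Local Notation protocol := (protocol C N M L).

Lemma protocol_ind_forall (Q : protocol -> Prop) :
  (forall l : L, Q (Leaf C N M l)) ->
  (forall p br, List.Forall (fun Kt => Q Kt.2) br -> Q (Node p br)) ->
  forall P, Q P.
Proof.
move=> HL HN; fix F 1 => P; case: P => [l|p br]; first exact: HL.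
apply: HN; elim: br => [|Kt br IH]; first by constructor.
by constructor; [exact: F | exact: IH].
Qed.

Fixpoint leaves (P : protocol) : seq ((vec -> vec) * L)%type :=
  match P with
  | Leaf l => [:: (id, l)]
  | Node p br =>
      (fix go (br : seq (op * protocol)%type) : seq ((vec -> vec) * L)%type :=
         match br with
         | [::] => [::]
         | (K, t) :: br' =>
             [seq ((fun v => g.1 (applyop K v)), g.2) | g <- leaves t] ++ go br'
         end) br
  end.

Lemma succ_prob_leaves (P : protocol) s v :
  succ_prob P s v = \sum_(g <- leaves P) (if g.2 == s then norm2 (g.1 v) else 0).
Proof.
elim/protocol_ind_forall: P v => [l|p br IH] v /=; first by rewrite big_seq1.
elim: br IH => [|[K t] br IHbr] IH /=; first by rewrite big_nil.
move/List.Forall_cons_iff: IH => [IHt IH].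
by rewrite big_cat big_map /= IHbr // IHt.
Qed.

Lemma norm2_ge0 (v : vec) : 0 <= norm2 v.
Proof. by apply: sumr_ge0 => x _; rewrite exprn_ge0. Qed.

Lemma norm2_eq0 (v : vec) : norm2 v = 0 -> forall x, v x = 0.
Proof.
move=> v0 x; apply/eqP; rewrite -normr_eq0 -(sqrf_eq0 `|v x|).
by apply/eqP; apply: (psumr_eq0P _ v0) => // y _; rewrite exprn_ge0.
Qed.

Lemma norm2_kraus (br : seq (op * protocol)%type) v :
  (forall x y, \sum_(Kt <- br) \sum_z (Kt.1 z x)^* * Kt.1 z y = (x == y)%:R) ->
  \sum_(Kt <- br) norm2 (applyop Kt.1 v) = norm2 v.
Proof.
move=> complete.
have E (K : op) : norm2 (applyop K v) =
   \sum_x \sum_y ((v x)^* * v y) * \sum_z ((K z x)^* * K z y).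
  rewrite /norm2 /applyop.
  under eq_bigr => z _ do rewrite normCK rmorph_sum mulr_sumr.
  rewrite exchange_big /=; apply: eq_bigr => x _.
  under eq_bigr => z _ do rewrite mulr_suml.
  rewrite exchange_big /=; apply: eq_bigr => y _.
  rewrite mulr_sumr; apply: eq_bigr => z _.
  by rewrite rmorphM /= [LHS]mulrC mulrACA [RHS]mulrC.
under eq_bigr => Kt _ do rewrite E.
rewrite exchange_big /= /norm2; apply: eq_bigr => x _.
rewrite exchange_big /=.
under eq_bigr => y _ do rewrite -mulr_sumr complete.
rewrite (bigD1 x) //= eqxx mulr1 big1 ?addr0; last first.
  by move=> y /negbTE; rewrite eq_sym => ->; rewrite mulr0.
by rewrite normCK mulrC.
Qed.

Lemma norm2_leaves (P : protocol) v : valid part P ->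
  \sum_(g <- leaves P) norm2 (g.1 v) = norm2 v.
Proof.
elim/protocol_ind_forall: P v => [l|p br IH] v /=; first by rewrite big_seq1.
case=> complete Hbr; rewrite -(norm2_kraus v complete).
elim: br IH Hbr {complete} => [|[K t] br IHbr] IH /=; first by rewrite !big_nil.
move/List.Forall_cons_iff: IH => [IHt IH] [_ [Vt Hbr]].
by rewrite big_cat big_map big_cons /= IHbr // IHt.
Qed.

Lemma succ_prob_le (P : protocol) s v : valid part P -> succ_prob P s v <= norm2 v.
Proof.
move=> VP; rewrite succ_prob_leaves -(norm2_leaves v VP) -big_mkcond /=.
by rewrite [leRHS](bigID (fun g => g.2 == s)) /= lerDl sumr_ge0 // => g _; apply: norm2_ge0.
Qed.

Lemma off_label_leaf_kills (P : protocol) s v : valid part P -> succ_prob P s v = norm2 v ->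
  forall g, List.In g (leaves P) -> g.2 != s -> forall x, g.1 v x = 0.
Proof.
move=> VP Hs g Hg Hgs; apply: norm2_eq0.
pose off := \sum_(h <- leaves P) (if h.2 != s then norm2 (h.1 v) else 0).
have off0 : off = 0.
  have : norm2 v = succ_prob P s v + off.
    rewrite -(norm2_leaves v VP) succ_prob_leaves -big_split /=.
    by apply: eq_bigr => h _; case: (h.2 == s); rewrite ?addr0 ?add0r.
  by rewrite Hs -{1}[norm2 v]addr0 => /addrI.
have := sum_In_eq0 _ off0 Hg; rewrite Hgs; apply=> h.
by case: (h.2 != s); rewrite ?norm2_ge0.
Qed.

End Protocols.

Section ProductArrays.
Variables (C : numClosedFieldType) (N M : nat) (part : 'I_N -> 'I_M).
Local Notation vec := (vec C N).
Local Notation op := (op C N).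

Definition on_party p0 (u : bits N -> C) :=
  forall x x', agree_on part p0 x x' -> u x = u x'.
Definition off_party p0 (w : bits N -> C) :=
  forall x x', agree_off part p0 x x' -> w x = w x'.

Definition product_array p0 (v00 v01 v10 v11 : vec) :=
  exists u0 u1 w0 w1, [/\ on_party p0 u0, on_party p0 u1, off_party p0 w0,
    off_party p0 w1 & forall x, [/\ v00 x = u0 x * w0 x, v01 x = u0 x * w1 x,
                                    v10 x = u1 x * w0 x & v11 x = u1 x * w1 x]].

Definition merge_on p0 (x y : bits N) : bits N :=
  [ffun q => if part q == p0 then x q else y q].

Lemma merge_on_agree p0 x y :
  agree_on part p0 (merge_on p0 x y) x /\ agree_off part p0 (merge_on p0 x y) y.
Proof.
by split=> q Hq; rewrite /merge_on ffunE ?Hq ?eqxx // (negbTE Hq).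
Qed.

Lemma product_array_norm2 p0 (v00 v01 v10 v11 : vec) :
  product_array p0 v00 v01 v10 v11 ->
  norm2 v00 * norm2 v11 = norm2 v01 * norm2 v10.
Proof.
move=> [u0 [u1 [w0 [w1 [Hu0 Hu1 Hw0 Hw1 Hv]]]]].
rewrite /norm2 !mulr_suml.
under eq_bigr => x _ do rewrite mulr_sumr.
under [in RHS]eq_bigr => x _ do rewrite mulr_sumr.
rewrite !pair_bigA /=.
pose sw (z : bits N * bits N) := (merge_on p0 z.1 z.2, merge_on p0 z.2 z.1).
have swK : involutive sw.
  move=> [x y]; rewrite /sw /merge_on /=; congr (_, _); apply/ffunP => q;
  by rewrite !ffunE; case: (part q == p0).
rewrite (reindex_inj (inv_inj swK)) /=; apply: eq_bigr => -[x y] _ /=.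
have [Axy1 Axy2] := merge_on_agree p0 x y; have [Ayx1 Ayx2] := merge_on_agree p0 y x.
case: (Hv (merge_on p0 x y)) => -> _ _ _; case: (Hv (merge_on p0 y x)) => _ _ _ ->.
case: (Hv x) => _ -> _ _; case: (Hv y) => _ _ -> _.
rewrite (Hu0 _ _ Axy1) (Hw0 _ _ Axy2) (Hu1 _ _ Ayx1) (Hw1 _ _ Ayx2) !normrM !exprMn.
by rewrite mulrACA [`|w0 y| ^+ 2 * _]mulrC mulrACA [X in _ * X]mulrC.
Qed.

Lemma product_array_orth p0 (v00 v01 v10 v11 : vec) :
  product_array p0 v00 v01 v10 v11 ->
  (forall x, v00 x = 0) -> \sum_x v01 x * (v10 x)^* = 0.
Proof.
move=> [u0 [u1 [w0 [w1 [_ _ _ _ Hv]]]]] v00_0.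
apply: big1 => x _; case: (Hv x) => E00 -> -> _.
have := v00_0 x; rewrite E00 => /eqP; rewrite mulf_eq0 => /orP[] /eqP ->.
  by rewrite !mul0r.
by rewrite rmorphM /= conjC0 !mulr0.
Qed.

Definition flip_on (S : pred 'I_N) (a y : bits N) : bits N :=
  [ffun q => if S q then y q (+) a q else y q].

Lemma flip_on_inj S a : injective (flip_on S a).
Proof.
move=> y1 y2 /ffunP E; apply/ffunP => q; have := E q; rewrite !ffunE.
by case: (S q) => //; case: (y1 q); case: (y2 q); case: (a q).
Qed.

Definition linear_map (f : vec -> vec) := forall a b (v w : vec),
  f (fun x => a * v x + b * w x) = (fun x => a * f v x + b * f w x).

Lemma applyop_linear (K : op) : linear_map (applyop K).
Proof.
move=> a b v w; apply: functional_extensionality => x; rewrite /applyop.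
rewrite !mulr_sumr -big_split /=; apply: eq_bigr => y _.
by rewrite mulrDr !mulrA [a * _]mulrC [b * _]mulrC.
Qed.

Lemma local_op_on_party p0 (K : op) (u w : bits N -> C) :
  local_op part p0 K -> on_party p0 u -> off_party p0 w ->
  on_party p0 (fun x => \sum_y K x y * u y) /\
  forall x, applyop K (fun y => u y * w y) x = (\sum_y K x y * u y) * w x.
Proof.
move=> [K0 K1] Hu Hw; split.
  move=> x x' Hxx'.
  pose a : bits N := [ffun q => x q (+) x' q].
  rewrite (reindex_inj (@flip_on_inj (fun q => part q != p0) a)) /=.
  apply: eq_bigr => y _.
  have -> : u (flip_on (fun q => part q != p0) a y) = u y.
    by apply: Hu => q Hq; rewrite /flip_on ffunE /= Hq eqxx.
  congr (_ * _).
  have [Hxy|Hxy] := classic (agree_off part p0 x' y).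
    apply: (K1 x _ x' y _ Hxy) => // q Hq.
      rewrite /flip_on !ffunE /= Hq /= (Hxy q Hq).
      by case: (x q); case: (y q).
    by rewrite /flip_on ffunE /= Hq eqxx.
  rewrite (K0 x' y) // K0 // => H; apply: Hxy => q Hq; have := H q Hq.
  by rewrite /flip_on !ffunE /= Hq /=; case: (x q); case: (x' q); case: (y q).
move=> x; rewrite /applyop mulr_suml; apply: eq_bigr => y _.
have [Hxy|Hxy] := classic (agree_off part p0 x y).
  by rewrite (Hw x y Hxy) mulrA.
by rewrite K0 // !mul0r.
Qed.

Lemma local_op_off_party p p0 (K : op) (u w : bits N -> C) :
  p != p0 -> local_op part p K -> on_party p0 u -> off_party p0 w ->
  off_party p0 (fun x => \sum_y K x y * w y) /\
  forall x, applyop K (fun y => u y * w y) x = u x * (\sum_y K x y * w y).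
Proof.
move=> Hpp0 [K0 K1] Hu Hw; split.
  move=> x x' Hxx'.
  pose a : bits N := [ffun q => x q (+) x' q].
  rewrite (reindex_inj (@flip_on_inj (fun q => part q == p0) a)) /=.
  apply: eq_bigr => y _.
  have -> : w (flip_on (fun q => part q == p0) a y) = w y.
    by apply: Hw => q Hq; rewrite /flip_on ffunE /= (negbTE Hq).
  congr (_ * _).
  have [Hxy|Hxy] := classic (agree_off part p x' y).
    apply: (K1 x _ x' y _ Hxy) => q Hq.
    - rewrite /flip_on !ffunE /=; case: ifP => Hq0; rewrite -(Hxy q Hq).
        by case: (x q); case: (x' q).
      by apply: Hxx'; rewrite Hq0.
    - by apply: Hxx'; rewrite Hq.
    - by rewrite /flip_on ffunE /= Hq (negbTE Hpp0).
  rewrite (K0 x' y) // K0 // => H; apply: Hxy => q Hq; have := H q Hq.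
  rewrite /flip_on !ffunE /=; case: ifP => Hq0.
    by case: (x q); case: (x' q); case: (y q).
  by move=> <-; rewrite Hxx' // Hq0.
move=> x; rewrite /applyop mulr_sumr; apply: eq_bigr => y _.
have [Hxy|Hxy] := classic (agree_off part p x y).
  rewrite (Hu x y) ?mulrA ?[u y * _]mulrC // => q Hq.
  by apply: Hxy; rewrite Hq eq_sym.
by rewrite K0 // !mul0r mulr0.
Qed.

Definition keeps_product_arrays (f : vec -> vec) := forall p0 v00 v01 v10 v11,
  product_array p0 v00 v01 v10 v11 ->
  product_array p0 (f v00) (f v01) (f v10) (f v11).

Lemma local_op_keeps_arrays p (K : op) :
  local_op part p K -> keeps_product_arrays (applyop K).
Proof.
move=> HK p0 v00 v01 v10 v11 [u0 [u1 [w0 [w1 [Hu0 Hu1 Hw0 Hw1 Hv]]]]].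
have E (v : vec) (u w : bits N -> C) : (forall x, v x = u x * w x) ->
    v = (fun y => u y * w y) by move=> H; apply: functional_extensionality.
rewrite (E v00 u0 w0) 1?(E v01 u0 w1) 1?(E v10 u1 w0) 1?(E v11 u1 w1) => [|x|x|x|x];
  try by case: (Hv x).
have [Ep|Hp] := eqVneq p p0.
  subst p.
  have [Hu0' A0] := local_op_on_party HK Hu0 Hw0.
  have [_ A1] := local_op_on_party HK Hu0 Hw1.
  have [Hu1' B0] := local_op_on_party HK Hu1 Hw0.
  have [_ B1] := local_op_on_party HK Hu1 Hw1.
  by do 4 eexists; split; [exact: Hu0'|exact: Hu1'|exact: Hw0|exact: Hw1|]; split.
have [Hw0' A0] := local_op_off_party Hp HK Hu0 Hw0.
have [Hw1' A1] := local_op_off_party Hp HK Hu0 Hw1.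
have [_ B0] := local_op_off_party Hp HK Hu1 Hw0.
have [_ B1] := local_op_off_party Hp HK Hu1 Hw1.
by do 4 eexists; split; [exact: Hu0|exact: Hu1|exact: Hw0'|exact: Hw1'|]; split.
Qed.

Lemma leaf_maps (L : eqType) (P : protocol C N M L) : valid part P ->
  forall g, List.In g (leaves P) -> linear_map g.1 /\ keeps_product_arrays g.1.
Proof.
elim/protocol_ind_forall: P => [l|p br IH] /=; first by move=> _ g [<-|[]]; split.
case=> _ Hbr.
elim: br IH Hbr => [|[K t] br IHbr] IH //=.
move/List.Forall_cons_iff: IH => [IHt IH] [HK [Vt Hbr]] g.
rewrite List.in_app_iff => -[|]; last exact: IHbr.
move=> /List.in_map_iff [g' [<- Hg']] /=.
have [Lg Pg] := IHt Vt g' Hg'.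
split=> [a b v w | p0 v00 v01 v10 v11 Hpa] /=.
  by rewrite applyop_linear; exact: Lg.
exact/Pg/(local_op_keeps_arrays HK).
Qed.

End ProductArrays.

Section Kets.
Variables (C : numClosedFieldType) (N : nat).
Local Notation vec := (vec C N).

Lemma norm2_orth_comb (a b : vec) g d :
  \sum_x a x * (b x)^* = 0 ->
  norm2 (fun x => g * a x + d * b x) = `|g| ^+ 2 * norm2 a + `|d| ^+ 2 * norm2 b.
Proof.
move=> ab0.
have ba0 : \sum_x b x * (a x)^* = 0.
  rewrite [RHS](_ : 0 = (\sum_x a x * (b x)^*)^*); last by rewrite ab0 conjC0.
  rewrite rmorph_sum; apply: eq_bigr => x _.
  by rewrite rmorphM /= conjCK mulrC.
have E x : `|g * a x + d * b x| ^+ 2 =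
   `|g| ^+ 2 * `|a x| ^+ 2 + `|d| ^+ 2 * `|b x| ^+ 2
   + (g * d^*) * (a x * (b x)^*) + (d * g^*) * (b x * (a x)^*).
  by rewrite !normCK rmorphD /= !rmorphM /=; ring.
rewrite /norm2; under eq_bigr => x _ do rewrite E.
by rewrite !big_split /= -!mulr_sumr ab0 ba0 !mulr0 !addr0.
Qed.

Lemma norm2_ket (x : bits N) : norm2 (ket C x) = 1.
Proof.
rewrite /norm2 (bigD1 x) //= /ket eqxx normr1 expr1n big1 ?addr0 //.
by move=> y /negbTE ->; rewrite normr0 expr0n.
Qed.

Lemma ket_orth (x y : bits N) : x != y -> \sum_z ket C x z * (ket C y z)^* = 0.
Proof.
move=> Hxy; apply: big1 => z _; rewrite /ket.
have [->|Hz] := eqVneq z x; last by rewrite mul0r.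
by rewrite (negbTE Hxy) conjC0 mulr0.
Qed.

Lemma norm2_ket_pair (x y : bits N) g d : x != y ->
  norm2 (fun z => g * ket C x z + d * ket C y z) = `|g| ^+ 2 + `|d| ^+ 2.
Proof. by move=> Hxy; rewrite norm2_orth_comb ?ket_orth // !norm2_ket !mulr1. Qed.

End Kets.

Section NoThreeStates.
Variables (C : numClosedFieldType) (N M : nat) (part : 'I_N -> 'I_M) (L : eqType).
Variable P : protocol C N M L.
Hypothesis VP : valid part P.
Variables (p0 : 'I_M) (x00 x01 x10 x11 : bits N).
Hypothesis PA : product_array part p0 (ket C x00) (ket C x01) (ket C x10) (ket C x11).
Hypothesis x00_x11 : x00 != x11.
Variables (a b g d : C).
Hypotheses (a_gt0 : 0 < a) (b_gt0 : 0 < b) (ab1 : a ^+ 2 + b ^+ 2 = 1).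
Hypotheses (g_neq0 : g != 0) (gd1 : `|g| ^+ 2 + `|d| ^+ 2 = 1).
Variables (lp lm lj : L).
Hypotheses (lp_lm : lp != lm) (lj_lp : lj != lp) (lj_lm : lj != lm).

Local Notation psi_p := (fun x => a * ket C x00 x + b * ket C x11 x).
Local Notation psi_m := (fun x => b * ket C x00 x + - a * ket C x11 x).
Local Notation psi_j := (fun x => g * ket C x01 x + d * ket C x10 x).

Hypothesis succ_p : succ_prob P lp psi_p = 1.
Hypothesis succ_m : succ_prob P lm psi_m = 1.
Hypothesis succ_j : succ_prob P lj psi_j = 1.

Lemma succ_p_full : succ_prob P lp psi_p = norm2 psi_p.
Proof. by rewrite succ_p norm2_ket_pair // !ger0_norm ?ltW. Qed.

Lemma succ_m_full : succ_prob P lm psi_m = norm2 psi_m.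
Proof. by rewrite succ_m norm2_ket_pair // normrN !ger0_norm ?ltW // addrC. Qed.

(* Leaves labelled neither lp nor lm annihilate span(psi_p, psi_m),
   which contains |x00>. *)
Lemma unlabelled_leaf_kills_x00 h : List.In h (leaves P) -> h.2 != lp -> h.2 != lm ->
  forall x, h.1 (ket C x00) x = 0.
Proof.
move=> Hh hp hm x; have [lin _] := leaf_maps VP Hh.
have := off_label_leaf_kills VP succ_p_full Hh hp x.
have := off_label_leaf_kills VP succ_m_full Hh hm x.
rewrite !lin => Zm Zp; exact: rotation_kernel ab1 Zp Zm.
Qed.

(* On leaves labelled lj, |x01> and |x10> stay orthogonal, since |x00> dies there. *)
Lemma lj_leaf_norm2 h : List.In h (leaves P) -> h.2 == lj ->
  norm2 (h.1 psi_j) =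
    `|g| ^+ 2 * norm2 (h.1 (ket C x01)) + `|d| ^+ 2 * norm2 (h.1 (ket C x10)).
Proof.
move=> Hh /eqP hl; have [lin keep] := leaf_maps VP Hh.
rewrite lin norm2_orth_comb //.
apply: (product_array_orth (keep _ _ _ _ _ PA)) => x.
by apply: unlabelled_leaf_kills_x00; rewrite // hl.
Qed.

Lemma succ_x01 : succ_prob P lj (ket C x01) = 1.
Proof.
set s01 := succ_prob P lj (ket C x01); set s10 := succ_prob P lj (ket C x10).
have decomp : `|g| ^+ 2 * s01 + `|d| ^+ 2 * s10 = 1.
  rewrite -succ_j /s01 /s10 !succ_prob_leaves !mulr_sumr -big_split /=.
  apply: sum_In_eq => h Hh; case: ifP => [/(lj_leaf_norm2 Hh) -> //|_].
  by rewrite !mulr0 addr0.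
have s01_le : s01 <= 1 by rewrite -(norm2_ket C x01) (succ_prob_le _ _ VP).
have s10_le : s10 <= 1 by rewrite -(norm2_ket C x10) (succ_prob_le _ _ VP).
have : `|g| ^+ 2 * (1 - s01) + `|d| ^+ 2 * (1 - s10) = 0.
  by rewrite !mulrBr !mulr1 addrACA -opprD decomp gd1 subrr.
move/eqP; rewrite paddr_eq0 ?mulr_ge0 ?exprn_ge0 ?subr_ge0 // => /andP[].
by rewrite mulf_eq0 expf_eq0 /= normr_eq0 (negbTE g_neq0) subr_eq0 => /eqP <-.
Qed.

(* On leaves labelled lp, |x01> dies; the product structure then kills |x00>
   or |x11>, and psi_m dies as well, so psi_p dies. *)
Lemma lp_leaf_kills_psi_p h : List.In h (leaves P) -> h.2 == lp ->
  forall x, h.1 psi_p x = 0.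
Proof.
move=> Hh /eqP hl; have [lin keep] := leaf_maps VP Hh.
have Z01 : norm2 (h.1 (ket C x01)) = 0.
  have succ01 : succ_prob P lj (ket C x01) = norm2 (ket C x01).
    by rewrite succ_x01 norm2_ket.
  rewrite /norm2 big1 // => x _.
  by rewrite (off_label_leaf_kills VP succ01 Hh) ?hl 1?eq_sym // normr0 expr0n.
have Zm x : b * h.1 (ket C x00) x + - a * h.1 (ket C x11) x = 0.
  have := off_label_leaf_kills VP succ_m_full Hh; rewrite lin hl; exact.
have [Z00 Z11] : (forall x, h.1 (ket C x00) x = 0) /\ (forall x, h.1 (ket C x11) x = 0).
  have /eqP := product_array_norm2 (keep _ _ _ _ _ PA).
  rewrite Z01 mul0r mulf_eq0 => /orP[] /eqP /norm2_eq0 Z; split=> // x; move/eqP: (Zm x).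
    by rewrite Z mulr0 add0r mulNr oppr_eq0 mulf_eq0 (gt_eqF a_gt0) => /eqP.
  by rewrite Z mulr0 addr0 mulf_eq0 (gt_eqF b_gt0) => /eqP.
by move=> x; rewrite lin Z00 Z11 !mulr0 addr0.
Qed.

Lemma no_three_states : False.
Proof.
have := succ_p; rewrite succ_prob_leaves (sum_In_eq (G := fun _ => 0)).
  by rewrite big1 // => /eqP; rewrite eq_sym oner_eq0.
move=> h Hh; case: ifP => // hl; rewrite /norm2 big1 // => x _.
by rewrite lp_leaf_kills_psi_p // normr0 expr0n.
Qed.

End NoThreeStates.

Lemma bcompK (N : nat) : involutive (@bcomp N).
Proof. by move=> y; apply/ffunP => q; rewrite !ffunE negbK. Qed.

Lemma bcomp_neq (N : nat) (q : 'I_N) (y : bits N) : y != bcomp y.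
Proof. by apply/eqP => /ffunP /(_ q); rewrite ffunE; case: (y q). Qed.

Section Cut.
Variables (C : numClosedFieldType) (N M : nat) (part : 'I_N -> 'I_M) (p0 : 'I_M).

Definition agree_onb (w z : bits N) := [forall q, (part q == p0) ==> (z q == w q)].
Definition agree_offb (w z : bits N) := [forall q, (part q != p0) ==> (z q == w q)].

Lemma eq_agreeb (w z : bits N) : (z == w) = agree_onb w z && agree_offb w z.
Proof.
apply/eqP/andP => [->|[/forallP Hon /forallP Hoff]].
  by split; apply/forallP => q; apply/implyP.
apply/ffunP => q.
by case E: (part q == p0); [move: (Hon q) | move: (Hoff q)]; rewrite E => /eqP.
Qed.

Lemma ket_factor (w z : bits N) :
  ket C w z = (agree_onb w z)%:R * (agree_offb w z)%:R.
Proof. by rewrite /ket eq_agreeb -natrM mulnb. Qed.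

Lemma agree_onb_ext (w w' z : bits N) :
  agree_on part p0 w w' -> agree_onb w z = agree_onb w' z.
Proof.
by move=> H; apply: eq_forallb => q; case E: (part q == p0); rewrite //= H //; apply/eqP.
Qed.

Lemma agree_offb_ext (w w' z : bits N) :
  agree_off part p0 w w' -> agree_offb w z = agree_offb w' z.
Proof. by move=> H; apply: eq_forallb => q; case E: (part q != p0); rewrite //= H. Qed.

Lemma agree_onb_on (w : bits N) : on_party part p0 (fun z => (agree_onb w z)%:R : C).
Proof.
move=> x x' H; suff -> : agree_onb w x = agree_onb w x' by [].
by apply: eq_forallb => q; case E: (part q == p0); rewrite //= H //; apply/eqP.
Qed.

Lemma agree_offb_off (w : bits N) : off_party part p0 (fun z => (agree_offb w z)%:R : C).
Proof.
move=> x x' H; suff -> : agree_offb w x = agree_offb w x' by [].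
by apply: eq_forallb => q; case E: (part q != p0); rewrite //= H.
Qed.

Definition flip_off (y : bits N) : bits N := merge_on part p0 y (bcomp y).

Lemma flip_offK : involutive flip_off.
Proof.
move=> y; apply/ffunP => q; rewrite /flip_off /merge_on !ffunE.
by case: (part q == p0); rewrite ?ffunE ?negbK.
Qed.

Lemma bcomp_flip_off (y : bits N) : bcomp (flip_off y) = flip_off (bcomp y).
Proof.
apply/ffunP => q; rewrite /flip_off /merge_on !ffunE.
by case: (part q == p0); rewrite ?ffunE.
Qed.

Lemma ket_product_array (y : bits N) : product_array part p0
  (ket C y) (ket C (flip_off y)) (ket C (bcomp (flip_off y))) (ket C (bcomp y)).
Proof.
exists (fun z => (agree_onb y z)%:R), (fun z => (agree_onb (bcomp y) z)%:R),
       (fun z => (agree_offb y z)%:R), (fun z => (agree_offb (bcomp y) z)%:R).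
split; [exact: agree_onb_on | exact: agree_onb_on
      | exact: agree_offb_off | exact: agree_offb_off | move=> z].
have [agr_on agr_off] := merge_on_agree part p0 y (bcomp y).
have agr_on' : agree_on part p0 (bcomp (flip_off y)) (bcomp y).
  by move=> q Hq; rewrite /flip_off /bcomp ffunE (agr_on q Hq) ffunE.
have agr_off' : agree_off part p0 (bcomp (flip_off y)) y.
  by move=> q Hq; rewrite /flip_off /bcomp ffunE (agr_off q Hq) ffunE negbK.
rewrite !ket_factor (agree_onb_ext z agr_on) (agree_offb_ext z agr_off).
by rewrite (agree_onb_ext z agr_on') (agree_offb_ext z agr_off').
Qed.

End Cut.

Section MeasureAll.
Variables (C : numClosedFieldType) (N : nat) (L : eqType).
Variables (q0 : 'I_N) (classify : bits N -> L).
Local Notation vec := (vec C N).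

Definition proj_bit (q : 'I_N) (b : bool) : op C N :=
  fun x y => ((x == y) && (x q == b))%:R.

Definition set_bit (c : bits N) (q : 'I_N) (b : bool) : bits N :=
  [ffun r => if r == q then b else c r].

Fixpoint measure_all (m : nat) (c : bits N) : protocol C N N L :=
  match m with
  | 0 => Leaf C N N (classify c)
  | m'.+1 => let q := insubd q0 m' in
      Node q [:: (proj_bit q false, measure_all m' (set_bit c q false));
                 (proj_bit q true, measure_all m' (set_bit c q true))]
  end.

Lemma applyop_proj_bit q b (v : vec) x : applyop (proj_bit q b) v x = (x q == b)%:R * v x.
Proof.
rewrite /applyop (bigD1 x) //= /proj_bit eqxx /= big1 ?addr0 // => y /negbTE Hy.
by rewrite eq_sym Hy mul0r.
Qed.

Lemma proj_bit_gram q b x y :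
  \sum_z ((proj_bit q b z x)^* * proj_bit q b z y) = ((x == y) && (x q == b))%:R.
Proof.
rewrite (bigD1 x) //= big1 ?addr0; last first.
  by move=> z /negbTE Hz; rewrite /proj_bit Hz conjC0 mul0r.
rewrite /proj_bit eqxx /= conjC_nat.
by case: (x == y); case: (x q == b); rewrite ?mulr1 ?mulr0.
Qed.

Lemma proj_bit_local q b : local_op (fun r : 'I_N => r) q (proj_bit q b).
Proof.
split=> [x y H|x y x' y' H1 H2 H3 H4].
  by rewrite /proj_bit; case: eqP => [E|] //=; case: H => r _; rewrite E.
have E (u w : bits N) : (forall r, r != q -> u r = w r) -> (u == w) = (u q == w q).
  move=> H; apply/eqP/eqP => [->//|Eq]; apply/ffunP => r.
  by case: (eqVneq r q) => [->|/H].
by rewrite /proj_bit (E x y H1) (E x' y' H2) (H3 q erefl) (H4 q erefl).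
Qed.

Lemma measure_all_valid m c : valid (fun r : 'I_N => r) (measure_all m c).
Proof.
elim: m c => [|m IH] c //=; split.
  move=> x y; rewrite !big_cons big_nil /= !proj_bit_gram addr0.
  by case: (x == y); case: (x _); rewrite /= ?addr0 ?add0r.
by do 2 (split; [exact: proj_bit_local | split; [exact: IH|]]).
Qed.

Lemma measure_all_succ m (c : bits N) s (v : vec) : (m <= N)%N ->
  (forall x, v x != 0 -> forall r : 'I_N, (m <= r)%N -> x r = c r) ->
  succ_prob (measure_all m c) s v =
    \sum_x (if classify x == s then `|v x| ^+ 2 else 0).
Proof.
elim: m c v => [|m IH] c v mN supp /=.
  have v0 x : x != c -> v x = 0.
    move=> Hx; apply/eqP; apply: contraNT Hx => /supp H.
    by apply/eqP/ffunP => r; exact: H.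
  rewrite (bigD1 c) //= big1 ?addr0; last first.
    by move=> x /v0 ->; rewrite normr0 expr0n; case: ifP.
  case: ifP => // _; rewrite /norm2 (bigD1 c) //= big1 ?addr0 //.
  by move=> x /v0 ->; rewrite normr0 expr0n.
set q := insubd q0 m.
have vq : val q = m by rewrite /q val_insubd mN.
have supp' b x : applyop (proj_bit q b) v x != 0 -> forall r : 'I_N, (m <= r)%N ->
    x r = set_bit c q b r.
  rewrite applyop_proj_bit mulf_eq0 negb_or => /andP[Hb Hvx] r Hr.
  rewrite /set_bit ffunE; case: (eqVneq r q) => [->|Hrq].
    by move: Hb; case: (x q =P b) => //= _; rewrite eqxx.
  apply: supp => //; rewrite ltn_neqAle Hr andbT; apply: contra Hrq => /eqP E.
  by apply/eqP/val_inj; rewrite vq E.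
rewrite IH ?(ltnW mN) //; last exact: supp'.
rewrite IH ?(ltnW mN) //; last exact: supp'.
rewrite addr0 -big_split /=; apply: eq_bigr => x _.
rewrite !applyop_proj_bit; case: ifP => _; last by rewrite addr0.
by case: (x q); rewrite /= ?mul1r ?mul0r normr0 expr0n ?addr0 ?add0r.
Qed.

End MeasureAll.

Section GHZBasis.
Variables (C : numClosedFieldType) (N : nat).
Local Notation I := 'I_(2 ^ (N - 1)).
Variable k : I -> bits N.
Hypothesis hk : pairing k.
Variables alpha beta : I -> C.
Hypothesis hab : forall i, 0 < beta i <= alpha i.
Hypothesis hnorm : forall i, alpha i ^+ 2 + beta i ^+ 2 = 1.

Lemma pair_index_ex (x : bits N) : exists i : I, (x == k i) || (x == bcomp (k i)).
Proof. by have [i [->|->]] := hk.1 x; exists i; rewrite eqxx ?orbT. Qed.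

Definition pair_index (x : bits N) : I := xchoose (pair_index_ex x).

Lemma pair_indexP x : x = k (pair_index x) \/ x = bcomp (k (pair_index x)).
Proof. by have /orP[/eqP|/eqP] := xchooseP (pair_index_ex x); [left|right]. Qed.

Lemma pair_index_uniq x i : x = k i \/ x = bcomp (k i) -> pair_index x = i.
Proof.
move=> Hx; apply: hk.2; have bcomp_inj := inv_inj (@bcompK N).
have := pair_indexP x; case: Hx => -> [] E.
- by left.
- by right; apply: bcomp_inj; rewrite bcompK.
- by right.
- by left; apply: bcomp_inj.
Qed.

Lemma alpha_gt0 i : 0 < alpha i.
Proof. by have /andP[b0 ba] := hab i; exact: lt_le_trans b0 ba. Qed.

Lemma beta_gt0 i : 0 < beta i.
Proof. by have /andP[] := hab i. Qed.

Lemma ghz_minus i : ghz k alpha beta (i, false) =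
  (fun x => beta i * ket C (k i) x + - alpha i * ket C (bcomp (k i)) x).
Proof. by apply: functional_extensionality => x; rewrite /ghz /= mulNr. Qed.

Lemma ghz_expansion j b (y : bits N) : y = k j \/ y = bcomp (k j) ->
  exists g d : C, [/\ g != 0, `|g| ^+ 2 + `|d| ^+ 2 = 1 &
    ghz k alpha beta (j, b) = (fun x => g * ket C y x + d * ket C (bcomp y) x)].
Proof.
have a0 := alpha_gt0 j; have b0 := beta_gt0 j.
have na : `|alpha j| ^+ 2 = alpha j ^+ 2 by rewrite ger0_norm // ltW.
have nb : `|beta j| ^+ 2 = beta j ^+ 2 by rewrite ger0_norm // ltW.
case=> ->; rewrite ?bcompK; case: b; rewrite ?ghz_minus.
- by exists (alpha j), (beta j); rewrite na nb hnorm gt_eqF.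
- by exists (beta j), (- alpha j); rewrite normrN na nb addrC hnorm gt_eqF.
- exists (beta j), (alpha j); rewrite na nb addrC hnorm gt_eqF //; split=> //.
  by apply: functional_extensionality => x; rewrite /ghz /= addrC.
- exists (- alpha j), (beta j); rewrite normrN na nb hnorm oppr_eq0 gt_eqF //.
  by split=> //; apply: functional_extensionality => x; rewrite addrC.
Qed.

Section UpperBound.
Variables (M : nat) (part : 'I_N -> 'I_M) (p0 : 'I_M) (q0 q1 : 'I_N).
Hypotheses (q0_p0 : part q0 = p0) (q1_p0 : part q1 != p0).

Local Notation flip := (flip_off part p0).

Definition cross (i : I) : I := pair_index (flip (k i)).

Lemma crossK : involutive cross.
Proof.
move=> i; apply: pair_index_uniq; case: (pair_indexP (flip (k i))) => E.
  by left; rewrite -E flip_offK.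
by right; rewrite -[k (pair_index _)]bcompK -E bcomp_flip_off flip_offK.
Qed.

(* flip y differs from y at q1 and from ~y at q0, so it lies in another pair. *)
Lemma flip_neq (y : bits N) : flip y != y.
Proof.
apply/eqP => /ffunP /(_ q1); rewrite /flip_off /merge_on ffunE (negbTE q1_p0) ffunE.
by case: (y q1).
Qed.

Lemma flip_neq_bcomp (y : bits N) : flip y != bcomp y.
Proof.
apply/eqP => /ffunP /(_ q0); rewrite /flip_off /merge_on !ffunE q0_p0 eqxx.
by case: (y q0).
Qed.

Lemma cross_neq i : cross i != i.
Proof.
apply/eqP => E; case: (pair_indexP (flip (k i))); rewrite /cross in E; rewrite E.
  by apply/eqP; rewrite flip_neq.
by apply/eqP; rewrite flip_neq_bcomp.
Qed.

Lemma locc_card_le (S : {set I * bool}) :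
  LOCC_dist part (ghz k alpha beta) (mem S) -> (#|S| <= 2 ^ (N - 1))%N.
Proof.
move=> [P [VP HS]]; rewrite -[X in (_ <= X)%N](card_ord (2 ^ (N - 1))).
apply: (card_no_pattern crossK) => i b Hp Hm Hj.
have [g [d [g0 gd1 Ej]]] := ghz_expansion b (pair_indexP (flip (k i))).
have := HS _ Hm; have := HS _ Hj; rewrite ghz_minus Ej => succ_j succ_m.
apply: (no_three_states VP (ket_product_array C part p0 (k i)) (bcomp_neq q0 _)
          (alpha_gt0 i) (beta_gt0 i) (hnorm i) g0 gd1 _ _ _ (HS _ Hp) succ_m succ_j).
- by rewrite xpair_eqE eqxx.
- by rewrite xpair_eqE (negbTE (cross_neq i)).
- by rewrite xpair_eqE (negbTE (cross_neq i)).
Qed.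

End UpperBound.

Lemma locc_attain (q0 : 'I_N) : exists S : {set I * bool},
  [/\ #|S| = (2 ^ (N - 1))%N, forall i, exists b, (i, b) \in S &
      LOCC_dist (fun q : 'I_N => q) (ghz k alpha beta) (mem S)].
Proof.
exists [set (i, true) | i : I]; split.
- by rewrite card_imset ?cardsT ?card_ord // => i j [].
- by move=> i; exists true; apply: imset_f.
exists (measure_all C q0 (fun x => (pair_index x, true)) N [ffun _ => false]); split.
  exact: measure_all_valid.
move=> _ /imsetP [i _ ->].
rewrite measure_all_succ // => [|x _ r]; last by rewrite leqNgt ltn_ord.
have [g [d [_ gd1 ->]]] := ghz_expansion true (or_introl (erefl (k i))).
rewrite -gd1 -(norm2_ket_pair g d (bcomp_neq q0 (k i))); apply: eq_bigr => x _.
case: ifP => [|/negbT Hx]; first by rewrite xpair_eqE andbT.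
have Hk : x != k i by apply: contra Hx => /eqP E; rewrite (@pair_index_uniq x i) //; left.
have Hkc : x != bcomp (k i).
  by apply: contra Hx => /eqP E; rewrite (@pair_index_uniq x i) //; right.
by rewrite /ket (negbTE Hk) (negbTE Hkc) !mulr0 addr0 normr0 expr0n.
Qed.

End GHZBasis.

Lemma other_party (N M : nat) (part : 'I_N -> 'I_M) (p0 : 'I_M) :
  configuration part -> exists q1, part q1 != p0.
Proof.
move=> [M2 onto]; have M0 : (0 < M)%N by apply: leq_trans M2.
pose p1 : 'I_M := if p0 == Ordinal M0 then Ordinal M2 else Ordinal M0.
have [q Hq] := onto p1; exists q; rewrite Hq /p1.
by case: ifP => [/eqP ->|]; last rewrite eq_sym => ->.
Qed.

Unset Implicit Arguments.

Theorem theorem1 (C : numClosedFieldType) (N : nat) (hN : (2 <= N)%N)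
  (k : 'I_(2 ^ (N - 1)) -> bits N) (hk : pairing k)
  (alpha beta : 'I_(2 ^ (N - 1)) -> C)
  (hab : forall i, 0 < beta i <= alpha i)
  (hnorm : forall i, alpha i ^+ 2 + beta i ^+ 2 = 1) :
  (forall (M : nat) (part : 'I_N -> 'I_M), configuration part ->
     forall S : {set 'I_(2 ^ (N - 1)) * bool},
       LOCC_dist part (ghz k alpha beta) (mem S) -> (#|S| <= 2 ^ (N - 1))%N)
  /\
  (exists S : {set 'I_(2 ^ (N - 1)) * bool},
     #|S| = (2 ^ (N - 1))%N /\
     (forall i, exists b, (i, b) \in S) /\
     LOCC_dist (fun q : 'I_N => q) (ghz k alpha beta) (mem S)).
Proof.
pose q0 : 'I_N := Ordinal (leq_trans (isT : 0 < 2)%N hN).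
split.
  move=> M part conf S; have [q1 q1_p0] := other_party (part q0) conf.
  exact: (locc_card_le hk hab hnorm (erefl (part q0)) q1_p0).
have [S [cardS cover dist]] := locc_attain hk hab hnorm q0.
by exists S.
Qed.
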